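(* The generating function $$F_{(213,312)}(x,p,q,u,v,s,t)=\sum_{n\ge0}\ \sum_{\pi\in S_n(213,312)} x^n p^{\operatorname{asc}(\pi)}q^{\operatorname{des}(\pi)}u^{\operatorname{lrmax}(\pi)}v^{\operatorname{rlmax}(\pi)}s^{\operatorname{lrmin}(\pi)}t^{\operatorname{rlmin}(\pi)}$$ is equal to $$1 + xuvst + \frac{p q s t^2 u^2 v^2 x^3}{(-1 + p t u x) (-1 + p u x + q v x)} + \frac{q s^2 t u v^2 x^2}{1 - q s v x} + \frac{p s t^2 u^2 v x^2}{1 - p t u x} + \frac{p q s^2 t u^2 v^2 x^3}{(-1 + p u x + q v x) (-1 + q s v x)}.$$
   Context: For $n\ge 0$, $S_n$ denotes the set of permutations $\pi=\pi_1\cdots\pi_n$ of $[n]=\{1,\dots,n\}$ ($S_0$ consists of the empty permutation, for which all statistics are $0$). $\pi$ avoids a pattern $\tau\in S_k$ if no subsequence $\pi_{i_1}\cdots\pi_{i_k}$ ($i_1<\dots<i_k$) satisfies $\pi_{i_a}<\pi_{i_b}\iff\tau_a<\tau_b$; $S_n(\tau,\rho)$ is the set of permutations in $S_n$ avoiding both $\tau$ and $\rho$. $\operatorname{asc}(\pi)$ (resp. $\operatorname{des}(\pi)$) is the number of $i\in[n-1]$ with $\pi_i<\pi_{i+1}$ (resp. $\pi_i>\pi_{i+1}$). $\pi_i$ is a left-to-right maximum (resp. minimum) if it is larger (resp. smaller) than every $\pi_j$ with $j<i$, and a right-to-left maximum (resp. minimum) if it is larger (resp. smaller) than every $\pi_j$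 with $j>i$; $\operatorname{lrmax},\operatorname{lrmin},\operatorname{rlmax},\operatorname{rlmin}$ count these. *)

From HB Require Import structures.
From mathcomp Require Import all_boot all_order all_algebra all_fingroup.
Set Implicit Arguments. Unset Strict Implicit. Unset Printing Implicit Defensive.
Import GRing.Theory.

(* A permutation pi : 'S_n is read as the word pi(0) pi(1) ... pi(n-1)
   (values 0-based; all statistics and pattern containment only depend on
   relative order, so this is the same as the 1-based convention). *)
Definition word n (pi : 'S_n) : seq nat := [seq val (pi i) | i <- enum 'I_n].

Definition contains (tau : seq nat) n (pi : 'S_n) : bool :=
  [exists f : {ffun 'I_(size tau) -> 'I_n},
     [forall a : 'I_(size tau), forall b : 'I_(size tau),
        ((a < b)%N ==> (f a < f b)%N) &&
        (((pi (f a) : nat) < pi (f b))%N == (nth 0 tau a < nth 0 tau b)%N)]].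

Definition avoids (tau : seq nat) n (pi : 'S_n) : bool := ~~ contains tau pi.

Definition asc_w (w : seq nat) : nat :=
  count (fun j => nth 0 w j < nth 0 w j.+1) (iota 0 (size w).-1).
Definition des_w (w : seq nat) : nat :=
  count (fun j => nth 0 w j > nth 0 w j.+1) (iota 0 (size w).-1).
Definition lrmax_w (w : seq nat) : nat :=
  count (fun j => all (fun k => nth 0 w k < nth 0 w j) (iota 0 j)) (iota 0 (size w)).
Definition lrmin_w (w : seq nat) : nat :=
  count (fun j => all (fun k => nth 0 w k > nth 0 w j) (iota 0 j)) (iota 0 (size w)).
Definition rlmax_w (w : seq nat) : nat :=
  count (fun j => all (fun k => nth 0 w k < nth 0 w j) (iota j.+1 (size w - j.+1)))
        (iota 0 (size w)).
Definition rlmin_w (w : seq nat) : nat :=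
  count (fun j => all (fun k => nth 0 w k > nth 0 w j) (iota j.+1 (size w - j.+1)))
        (iota 0 (size w)).

Definition asc n (pi : 'S_n) := asc_w (word pi).
Definition des n (pi : 'S_n) := des_w (word pi).
Definition lrmax n (pi : 'S_n) := lrmax_w (word pi).
Definition lrmin n (pi : 'S_n) := lrmin_w (word pi).
Definition rlmax n (pi : 'S_n) := rlmax_w (word pi).
Definition rlmin n (pi : 'S_n) := rlmin_w (word pi).

Local Open Scope ring_scope.

Definition coefF (R : comNzRingType) (p q u v s t : R) (n : nat) : R :=
  \sum_(pi : 'S_n | avoids [:: 2; 1; 3] pi && avoids [:: 3; 1; 2] pi)
     p ^+ asc pi * q ^+ des pi * u ^+ lrmax pi * v ^+ rlmax pi
       * s ^+ lrmin pi * t ^+ rlmin pi.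

Definition Ftrunc (R : comNzRingType) (p q u v s t : R) (N : nat) : {poly R} :=
  \sum_(n < N) (coefF p q u v s t n)%:P * 'X^n.

From mathcomp Require Import all_boot all_algebra all_fingroup.
From mathcomp Require Import zify ring.
Set Implicit Arguments. Unset Strict Implicit. Unset Printing Implicit Defensive.
Import GRing.Theory.

(* A permutation avoids 213 and 312 iff its word has no valley, i.e. iff its
   minimum sits at one end and the remaining entries are again valley-free.
   So the words of S_(m+1)(213,312) are obtained from those of S_m(213,312)
   by prepending or appending a new minimum.  Prepending adds an ascent and
   a left-to-right maximum, a right-to-left minimum, and makes the new entry
   the only left-to-right minimum; appending is the mirror image.  Writing
   T_m(x, y) for the weight sum with x marking lrmin and y marking rlmin,
   this gives T_(m+1)(x, y) = x y (p u T_m(1, y) + q v T_m(x, 1)).  Hence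
   T_m(1, t) and T_m(s, 1) satisfy linear recurrences with characteristic
   roots {ptu, pu+qv} and {qsv, pu+qv}, the coefficients of F satisfy the
   third-order recurrence with characteristic polynomial given by the
   common denominator, and the numerator is read off the first five terms. *)

Definition cons_min (w : seq nat) : seq nat := 0 :: map S w.
Definition rcons_min (w : seq nat) : seq nat := rcons (map S w) 0.

Lemma size_cons_min w : size (cons_min w) = (size w).+1.
Proof. by rewrite /= size_map. Qed.

Lemma size_rcons_min w : size (rcons_min w) = (size w).+1.
Proof. by rewrite size_rcons size_map. Qed.

Lemma nth_rcons_min w j : j < size w -> nth 0 (rcons_min w) j = (nth 0 w j).+1.
Proof. by move=> jw; rewrite nth_rcons size_map jw (nth_map 0). Qed.

Lemma nth_rcons_min_size w : nth 0 (rcons_min w) (size w) = 0.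
Proof. by rewrite nth_rcons size_map ltnn eqxx. Qed.

Lemma iotaS_shift m n : iota m.+1 n = map S (iota m n).
Proof. by rewrite -add1n iotaDl. Qed.

Lemma iota_rcons m n : iota m n.+1 = rcons (iota m n) (m + n).
Proof. by rewrite -cats1 -addn1 iotaD. Qed.

Lemma asc_cons_min w : 0 < size w -> asc_w (cons_min w) = (asc_w w).+1.
Proof.
move=> w0; rewrite /asc_w size_cons_min -(prednK w0) /= iotaS_shift count_map.
rewrite (nth_map 0) // add1n; congr _.+1; apply: eq_in_count => j.
by rewrite mem_iota /= => jw; rewrite !(nth_map 0) ?ltnS //; lia.
Qed.

Lemma des_cons_min w : des_w (cons_min w) = des_w w.
Proof.
have [/size0nil -> // | w0] := posnP (size w).
rewrite /des_w size_cons_min -(prednK w0) /= iotaS_shift count_map.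
rewrite add0n; apply: eq_in_count => j.
by rewrite mem_iota /= => jw; rewrite !(nth_map 0) ?ltnS //; lia.
Qed.

Lemma lrmax_cons_min w : lrmax_w (cons_min w) = (lrmax_w w).+1.
Proof.
rewrite /lrmax_w size_cons_min /= iotaS_shift count_map add1n; congr _.+1.
apply: eq_in_count => j; rewrite mem_iota /= => jw.
rewrite iotaS_shift all_map (nth_map 0) //; apply: eq_in_all => k.
by rewrite mem_iota /= => kj; rewrite (nth_map 0) ?ltnS //; lia.
Qed.

Lemma lrmin_cons_min w : lrmin_w (cons_min w) = 1.
Proof.
rewrite /lrmin_w size_cons_min /= iotaS_shift count_map; apply/eqP.
by rewrite eqn_add2l -leqn0 leqNgt -has_count; apply/hasP => -[j].
Qed.

Lemma rlmax_cons_min w : 0 < size w -> rlmax_w (cons_min w) = rlmax_w w.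
Proof.
move=> w0; rewrite /rlmax_w size_cons_min /= subSS subn0.
have -> : all (fun k => nth 0 (cons_min w) k < 0) (iota 1 (size w)) = false.
  by rewrite -(prednK w0).
rewrite iotaS_shift count_map; apply: eq_in_count => j; rewrite mem_iota /= => jw.
rewrite subSS iotaS_shift all_map (nth_map 0) //; apply: eq_in_all => k.
by rewrite mem_iota => /andP[jk kw] /=; rewrite (nth_map 0) ?ltnS //; lia.
Qed.

Lemma rlmin_cons_min w : rlmin_w (cons_min w) = (rlmin_w w).+1.
Proof.
rewrite /rlmin_w size_cons_min /= subSS subn0.
have -> : all (fun k => 0 < nth 0 (cons_min w) k) (iota 1 (size w)).
  by apply/allP => -[|k]; rewrite mem_iota //= => kw; rewrite (nth_map 0).
rewrite /= iotaS_shift count_map add1n; congr _.+1.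
apply: eq_in_count => j; rewrite mem_iota /= => jw.
rewrite subSS iotaS_shift all_map (nth_map 0) //; apply: eq_in_all => k.
by rewrite mem_iota => /andP[jk kw] /=; rewrite (nth_map 0) ?ltnS //; lia.
Qed.

Lemma asc_rcons_min w : asc_w (rcons_min w) = asc_w w.
Proof.
have [/size0nil -> // | /prednK sw] := posnP (size w).
rewrite /asc_w size_rcons_min /= -sw iota_rcons -cats1 count_cat /=.
rewrite sw nth_rcons_min_size ltn0 !addn0; apply: eq_in_count => j.
by rewrite mem_iota => /andP[_ jw]; rewrite !nth_rcons_min ?ltnS //; lia.
Qed.

Lemma des_rcons_min w : 0 < size w -> des_w (rcons_min w) = (des_w w).+1.
Proof.
move=> /prednK sw; rewrite /des_w size_rcons_min /= -sw iota_rcons -cats1.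
rewrite count_cat /= sw nth_rcons_min_size nth_rcons_min; last lia.
rewrite addn1; congr _.+1; apply: eq_in_count => j.
by rewrite mem_iota => /andP[_ jw]; rewrite !nth_rcons_min ?ltnS //; lia.
Qed.

Lemma lrmax_rcons_min w : 0 < size w -> lrmax_w (rcons_min w) = lrmax_w w.
Proof.
move=> w0; rewrite /lrmax_w size_rcons_min iota_rcons -cats1 count_cat /=.
rewrite nth_rcons_min_size (_ : all _ (iota 0 (size w)) = false); last first.
  by rewrite -(prednK w0).
rewrite !addn0; apply: eq_in_count => j.
rewrite mem_iota => /andP[_ jw]; rewrite nth_rcons_min //; apply: eq_in_all => k.
by rewrite mem_iota => /andP[_ kj]; rewrite nth_rcons_min //; lia.
Qed.

Lemma lrmin_rcons_min w : lrmin_w (rcons_min w) = (lrmin_w w).+1.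
Proof.
rewrite /lrmin_w size_rcons_min iota_rcons -cats1 count_cat /= nth_rcons_min_size.
have -> : all (fun k => 0 < nth 0 (rcons_min w) k) (iota 0 (size w)).
  by apply/allP => k; rewrite mem_iota => /andP[_ kw]; rewrite nth_rcons_min.
rewrite addn1; congr _.+1; apply: eq_in_count => j.
rewrite mem_iota => /andP[_ jw]; rewrite nth_rcons_min //; apply: eq_in_all => k.
by rewrite mem_iota => /andP[_ kj]; rewrite nth_rcons_min //; lia.
Qed.

Lemma rlmax_rcons_min w : rlmax_w (rcons_min w) = (rlmax_w w).+1.
Proof.
rewrite /rlmax_w size_rcons_min iota_rcons -cats1 count_cat /= add0n subnn /= addn1.
congr _.+1; apply: eq_in_count => j; rewrite mem_iota add0n => /andP[_ jw].
rewrite subSS -(subnSK jw) iota_rcons all_rcons subnKC // nth_rcons_min_size.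
rewrite nth_rcons_min //=; apply: eq_in_all => k.
by rewrite mem_iota => /andP[_ kw]; rewrite nth_rcons_min //; lia.
Qed.

Lemma rlmin_rcons_min w : rlmin_w (rcons_min w) = 1.
Proof.
rewrite /rlmin_w size_rcons_min iota_rcons -cats1 count_cat /= add0n subnn /=.
rewrite -[RHS]add0n; congr (_ + _); apply/eqP; rewrite -leqn0 leqNgt -has_count.
apply/hasP => -[j]; rewrite mem_iota => /andP[_ jw] /=.
by rewrite subSS -(subnSK jw) iota_rcons all_rcons subnKC // nth_rcons_min_size.
Qed.

Definition valley_free (w : seq nat) : Prop :=
  forall i j k, i < j -> j < k -> k < size w ->
  ~~ ((nth 0 w j < nth 0 w i) && (nth 0 w j < nth 0 w k)).

Lemma valley_free_cons_min w : valley_free (cons_min w) <-> valley_free w.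
Proof.
split=> V i j k ij jk kw.
  have := V i.+1 j.+1 k.+1 ij jk; rewrite size_cons_min /= !(nth_map 0) ?ltnS //; lia.
move: kw; rewrite size_cons_min /cons_min; case: i ij => [|i] ij //=.
case: j ij jk => [|j] // ij; case: k => [|k] //= jk kw.
rewrite !(nth_map 0) ?ltnS; try lia; exact: V.
Qed.

Lemma valley_free_rcons_min w : valley_free (rcons_min w) <-> valley_free w.
Proof.
split=> V i j k ij jk kw.
  have := V i j k ij jk; rewrite size_rcons_min !nth_rcons_min ?ltnS //; lia.
move: kw; rewrite size_rcons_min ltnS leq_eqVlt => /orP[/eqP-> | kw].
  by rewrite nth_rcons_min_size ltn0 andbF.
rewrite !nth_rcons_min ?ltnS; try lia; exact: V.
Qed.

Lemma valley_free_min_at_end w :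
  valley_free w -> 0 \in w -> nth 0 w 0 = 0 \/ nth 0 w (size w).-1 = 0.
Proof.
move=> V w0; set j := index 0 w.
have wj : nth 0 w j = 0 := nth_index 0 w0.
have jw : j < size w by rewrite index_mem.
have [j0 | jp] := posnP j; first by left; rewrite j0 in wj.
have [jl | jl] := ltnP j (size w).-1; last by right; have <- : j = (size w).-1 by lia.
have := V 0 j (size w).-1 jp jl; rewrite wj !lt0n negb_and !negbK.
by case/(_ _)/orP=> [|/eqP|/eqP]; [lia | left | right].
Qed.

Fixpoint valley_free_words m : seq (seq nat) :=
  if m is m'.+1 then
    map cons_min (valley_free_words m') ++ map rcons_min (valley_free_words m')
  else [:: [:: 0]].

Lemma perm_iota_cons_min w m :
  perm_eq w (iota 0 m) -> perm_eq (cons_min w) (iota 0 m.+1).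
Proof. by move=> wm; rewrite /= perm_cons iotaS_shift perm_map. Qed.

Lemma perm_iota_rcons_min w m :
  perm_eq w (iota 0 m) -> perm_eq (rcons_min w) (iota 0 m.+1).
Proof. by rewrite /rcons_min perm_rcons; apply: perm_iota_cons_min. Qed.

Lemma perm_iota_cons0 w m :
  perm_eq (0 :: w) (iota 0 m.+1) -> exists2 w0, w = map S w0 & perm_eq w0 (iota 0 m).
Proof.
rewrite /= perm_cons => wm; exists (map predn w).
  rewrite -map_comp map_id_in // => x; rewrite (perm_mem wm) mem_iota.
  by case/andP=> /prednK.
by have := perm_map predn wm; rewrite iotaS_shift -map_comp map_id.
Qed.

Lemma valley_free_wordsP m w :
  w \in valley_free_words m -> perm_eq w (iota 0 m.+1) /\ valley_free w.
Proof.
elim: m w => [|m IH] w.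
  by rewrite mem_seq1 => /eqP->; split=> // i j k ij jk /=; lia.
rewrite [valley_free_words _]/= mem_cat => /orP[] /mapP[w0 /IH[w0p V] ->].
  by split; [apply: perm_iota_cons_min | apply/valley_free_cons_min].
by split; [apply: perm_iota_rcons_min | apply/valley_free_rcons_min].
Qed.

Lemma valley_free_words_complete m w :
  perm_eq w (iota 0 m.+1) -> valley_free w -> w \in valley_free_words m.
Proof.
elim: m w => [|m IH] w wp V; first by rewrite (perm_small_eq _ wp) ?mem_seq1.
have w0 : 0 \in w by rewrite (perm_mem wp) mem_iota.
have [{}w0 | wl] := valley_free_min_at_end V w0.
  case: w w0 wp V => [//|x w] x0; rewrite [x]x0 => /perm_iota_cons0[w' -> w'p] V.
  rewrite mem_cat; apply/orP; left.
  by apply: (map_f cons_min); apply: IH => //; apply/valley_free_cons_min.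
case/lastP: w w0 wl wp V => [//|w x] _; rewrite nth_last last_rcons => ->.
rewrite perm_rcons => /perm_iota_cons0[w' -> w'p] V.
rewrite mem_cat; apply/orP; right.
by apply: (map_f rcons_min); apply: IH => //; apply/valley_free_rcons_min.
Qed.

Lemma uniq_valley_free_words m : uniq (valley_free_words m).
Proof.
elim: m => [|m IH] //=; rewrite cat_uniq !map_inj_uniq ?IH ?andbT //.
- apply/hasP => -[_ /mapP[w /valley_free_wordsP[/perm_size wp _] ->]].
  case/mapP=> w' _ /(congr1 (nth 0 ^~ 0)); rewrite nth_rcons_min //.
  by rewrite wp size_iota.
- by move=> w w' /rcons_inj[] /(inj_map succn_inj).
- by move=> w w' [] /(inj_map succn_inj).
Qed.

Lemma size_word n (pi : 'S_n) : size (word pi) = n.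
Proof. by rewrite size_map size_enum_ord. Qed.

Lemma nth_word n (pi : 'S_n) (i : 'I_n) : nth 0 (word pi) i = pi i.
Proof. by rewrite (nth_map i) ?size_enum_ord // nth_ord_enum. Qed.

Lemma word_inj n : injective (@word n).
Proof.
move=> pi1 pi2 /(congr1 (nth 0)) e; apply/permP => i; apply: val_inj.
by rewrite /= -!nth_word e.
Qed.

Lemma perm_iota_word n (pi : 'S_n) : perm_eq (word pi) (iota 0 n).
Proof.
apply: uniq_perm; rewrite ?iota_uniq //.
  by rewrite map_inj_uniq ?enum_uniq // => i j /val_inj/perm_inj.
move=> x; rewrite mem_iota /=; apply/mapP/idP => [[i _ ->] | xn].
  exact: ltn_ord.
by exists (perm_inv pi (Ordinal xn)); rewrite ?mem_enum ?permKV.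
Qed.

Lemma word_surj n w : perm_eq w (iota 0 n) -> exists pi : 'S_n, word pi = w.
Proof.
move=> wn; have /eqP sw : size w == n by rewrite (perm_size wn) size_iota.
have wi (i : 'I_n) : nth 0 w i < n.
  have : nth 0 w i \in w by rewrite mem_nth ?sw.
  by rewrite (perm_mem wn) mem_iota.
pose f i := Ordinal (wi i).
have f_inj : injective f.
  move=> i j /(congr1 val) /eqP; rewrite nth_uniq ?sw // ?(perm_uniq wn) ?iota_uniq //.
  by move/eqP/val_inj.
exists (perm f_inj); rewrite /word (@eq_map _ _ _ (fun i : 'I_n => nth 0 w i)) => [|i].
  by rewrite -[RHS](mkseq_nth 0) sw /mkseq -val_enum_ord -map_comp.
by rewrite permE.
Qed.

Lemma contains_valleyP n (pi : 'S_n) x y z : y < x -> y < z -> x != z ->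
  contains [:: x; y; z] pi <->
  exists i j k : 'I_n,
    [/\ i < j < k, pi j < pi i, pi j < pi k & (pi i < pi k) = (x < z)].
Proof.
move=> yx yz xz; pose o0 := @Ordinal 3 0 isT; pose o1 := @Ordinal 3 1 isT.
pose o2 := @Ordinal 3 2 isT.
split=> [/existsP[f /forallP H] | [i [j [k [/andP[ij jk] ji jk' e]]]]].
  have cmp a b := elimT forallP (H a) b.
  have /andP[/implyP/(_ isT) f01 _] := cmp o0 o1.
  have /andP[/implyP/(_ isT) f12 /eqP e12] := cmp o1 o2.
  have /andP[_ /eqP e10] := cmp o1 o0.
  have /andP[_ /eqP e02] := cmp o0 o2.
  by exists (f o0), (f o1), (f o2); rewrite f01 f12 e10 e12 e02 yx yz.
have ik := ltn_trans ij jk.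
have pik : val (pi i) != val (pi k).
  by apply: contraTneq ik => /val_inj/perm_inj ->; rewrite ltnn.
have e' : (pi k < pi i) = (z < x).
  by rewrite ltnNge leq_eqVlt (negbTE pik) e -leqNgt leq_eqVlt eq_sym (negbTE xz).
apply/existsP; exists [ffun a : 'I_3 => nth i [:: i; j; k] a].
apply/forallP => -[[|[|[|a]]] Ha] //; apply/forallP => -[[|[|[|b]]] Hb] //=;
  rewrite !ffunE /= ?ltnn ?ik ?ij ?jk ?ji ?jk' ?e ?e' ?eqxx //=; lia.
Qed.

Lemma avoids_213_312P n (pi : 'S_n) :
  avoids [:: 2; 1; 3] pi && avoids [:: 3; 1; 2] pi <-> valley_free (word pi).
Proof.
split=> [/andP[/negP A213 /negP A312] i j k ij jk | V].
  rewrite size_word => kn; have jn : j < n by lia.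
  have iN : i < n by lia.
  rewrite (nth_word pi (Ordinal iN)) (nth_word pi (Ordinal jn)) (nth_word pi (Ordinal kn)).
  apply/negP => /andP[ji jk'].
  have [ik | ki | /val_inj/perm_inj/(congr1 val)/=] := ltngtP (pi (Ordinal iN)) (pi (Ordinal kn)).
  - apply: A213; apply/contains_valleyP => //.
    by exists (Ordinal iN), (Ordinal jn), (Ordinal kn); rewrite /= ij jk ji jk' ik.
  - apply: A312; apply/contains_valleyP => //.
    exists (Ordinal iN), (Ordinal jn), (Ordinal kn).
    by rewrite /= ij jk ji jk' ltnNge ltnW.
  - lia.
apply/andP; split; apply/negP => /contains_valleyP[] // i [j [k [/andP[ij jk] ji jk' _]]];
  by have := V i j k ij jk; rewrite size_word ltn_ord !nth_word ji jk' => /(_ isT).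
Qed.

Lemma perm_avoider_words n :
  perm_eq [seq word pi | pi <- index_enum 'S_n.+1 &
                          avoids [:: 2; 1; 3] pi && avoids [:: 3; 1; 2] pi]
          (valley_free_words n).
Proof.
apply: uniq_perm.
- by rewrite map_inj_uniq ?filter_uniq ?index_enum_uniq //; apply: word_inj.
- exact: uniq_valley_free_words.
move=> w; apply/mapP/idP => [[pi] | /valley_free_wordsP[wp V]].
  rewrite mem_filter => /andP[/avoids_213_312P V _] ->.
  exact: valley_free_words_complete (perm_iota_word pi) V.
have [pi piw] := word_surj wp; exists pi => //.
by rewrite mem_filter mem_index_enum andbT; apply/avoids_213_312P; rewrite piw.
Qed.

Local Open Scope ring_scope.

Section WeightSum.
Variables (R : comNzRingType) (p q u v : R).

Definition weight (x y : R) (w : seq nat) : R :=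
  p ^+ asc_w w * q ^+ des_w w * u ^+ lrmax_w w * v ^+ rlmax_w w
    * x ^+ lrmin_w w * y ^+ rlmin_w w.

Definition weight_sum m x y : R := \sum_(w <- valley_free_words m) weight x y w.

Lemma weight_sum0 x y : weight_sum 0 x y = u * v * x * y.
Proof. by rewrite /weight_sum big_seq1 /weight /= !expr0 !expr1 !mul1r. Qed.

Lemma weight_sumS m x y :
  weight_sum m.+1 x y = p * u * x * y * weight_sum m 1 y + q * v * x * y * weight_sum m x 1.
Proof.
rewrite /weight_sum big_cat !big_map !big_distrr /=.
have size_gt0 w : w \in valley_free_words m -> (0 < size w)%N.
  by case/valley_free_wordsP=> /perm_size-> _; rewrite size_iota.
congr (_ + _); rewrite !big_seq; apply: eq_bigr => w /size_gt0 w0; rewrite /weight.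
  rewrite asc_cons_min // des_cons_min lrmax_cons_min lrmin_cons_min.
  by rewrite rlmax_cons_min // rlmin_cons_min !exprS expr1n; ring.
rewrite asc_rcons_min des_rcons_min // lrmax_rcons_min // lrmin_rcons_min.
by rewrite rlmax_rcons_min rlmin_rcons_min !exprS expr1n; ring.
Qed.

End WeightSum.

Section CoefF.
Variables (R : comNzRingType) (p q u v s t : R).

Lemma coefF0 : coefF p q u v s t 0 = 1.
Proof.
rewrite /coefF (big_pred1 1%g) => [|pi]; last first.
  rewrite /avoids /contains (_ : pi = 1%g); last by apply/permP => -[].
  rewrite [RHS]/= eqxx; apply/andP.
  by split; apply/negP => /existsP[f _]; case: (f ord0).
rewrite /asc /des /lrmax /rlmax /lrmin /rlmin.
have -> : word (1%g : 'S_0) = [::] by apply/size0nil; rewrite size_word.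
by rewrite /= !expr0 !mulr1.
Qed.

Lemma coefFS n : coefF p q u v s t n.+1 = weight_sum p q u v n s t.
Proof.
rewrite /coefF -big_filter -(big_map (@word _) xpredT (weight p q u v s t)).
by rewrite (perm_big _ (perm_avoider_words n)).
Qed.

End CoefF.

Section Recurrence.
Variables (R : comNzRingType) (p q u v : R).
Local Notation T := (weight_sum p q u v).

Lemma weight_sum_1y_rec m y :
  T m.+2 1 y = (p * u * y + (p * u + q * v)) * T m.+1 1 y
               - p * u * y * (p * u + q * v) * T m 1 y.
Proof. rewrite !weight_sumS; ring. Qed.

Lemma weight_sum_x1_rec m x :
  T m.+2 x 1 = (q * v * x + (p * u + q * v)) * T m.+1 x 1
               - q * v * x * (p * u + q * v) * T m x 1.
Proof. rewrite !weight_sumS; ring. Qed.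

Lemma weight_sum_rec m s t (a := p * t * u) (b := p * u + q * v) (c := q * s * v) :
  T m.+4 s t = (a + b + c) * T m.+3 s t - (a * b + b * c + c * a) * T m.+2 s t
               + a * b * c * T m.+1 s t.
Proof.
rewrite !(weight_sumS p q u v _ s t) !weight_sum_1y_rec !weight_sum_x1_rec.
rewrite /a /b /c; ring.
Qed.

End Recurrence.

Lemma Ftrunc_poly (R : comNzRingType) (p q u v s t : R) N :
  Ftrunc p q u v s t N = \poly_(i < N) coefF p q u v s t i.
Proof. by rewrite poly_def; apply: eq_bigr => i _; rewrite mul_polyC. Qed.

Section Coefficients.
Variable R : comNzRingType.
Implicit Types P : {poly R}.

Lemma coef_mul_CXn P (d : R) k n :
  (P * (d%:P * 'X^k))`_n = if (n < k)%N then 0 else P`_(n - k) * d.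
Proof. by rewrite mulrA coefMXn coefMC. Qed.

Lemma coef_mul_cubic P (d0 d1 d2 d3 : R) n :
  (P * (d0%:P + d1%:P * 'X + d2%:P * 'X^2 + d3%:P * 'X^3))`_n =
  P`_n * d0 + (if (n < 1)%N then 0 else P`_(n - 1) * d1)
  + (if (n < 2)%N then 0 else P`_(n - 2) * d2) + (if (n < 3)%N then 0 else P`_(n - 3) * d3).
Proof. by rewrite !mulrDr !coefD coefMC -['X]expr1 !coef_mul_CXn. Qed.

Lemma coef_quartic (d0 d1 d2 d3 d4 : R) n :
  (d0%:P + d1%:P * 'X + d2%:P * 'X^2 + d3%:P * 'X^3 + d4%:P * 'X^4)`_n =
  [:: d0; d1; d2; d3; d4]`_n.
Proof.
rewrite !coefD coefC -['X]expr1 !coefCM !coefXn.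
by case: n => [|[|[|[|[|n]]]]]; rewrite /= ?(mulr0, mulr1, addr0, add0r) ?nth_nil.
Qed.

End Coefficients.

Theorem theorem11 (R : comNzRingType) (p q u v s t : R) (N n : nat) :
  (n < N)%N ->
  let X : {poly R} := 'X in
  let A := (p * t * u)%:P * X in
  let B := (p * u)%:P * X + (q * v)%:P * X in
  let C := (q * s * v)%:P * X in
  (Ftrunc p q u v s t N * ((-1 + A) * (-1 + B) * (-1 + C)))`_n =
  ( (1 + (u * v * s * t)%:P * X) * ((-1 + A) * (-1 + B) * (-1 + C))
    + (p * q * s * t ^+ 2 * u ^+ 2 * v ^+ 2)%:P * X ^+ 3 * (-1 + C)
    - (q * s ^+ 2 * t * u * v ^+ 2)%:P * X ^+ 2 * ((-1 + A) * (-1 + B))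
    - (p * s * t ^+ 2 * u ^+ 2 * v)%:P * X ^+ 2 * ((-1 + B) * (-1 + C))
    + (p * q * s ^+ 2 * t * u ^+ 2 * v ^+ 2)%:P * X ^+ 3 * (-1 + A) )`_n.
Proof.
move=> nN X A B C; rewrite Ftrunc_poly.
set a := p * t * u; set b := p * u + q * v; set c := q * s * v.
set e := u * v * s * t; set al := p * q * s * t ^+ 2 * u ^+ 2 * v ^+ 2.
set be := q * s ^+ 2 * t * u * v ^+ 2; set ga := p * s * t ^+ 2 * u ^+ 2 * v.
set de := p * q * s ^+ 2 * t * u ^+ 2 * v ^+ 2.
set d1 := a + b + c; set d2 := - (a * b + b * c + c * a); set d3 := a * b * c.
have den : (-1 + A) * (-1 + B) * (-1 + C) =
    (-1)%:P + d1%:P * 'X + d2%:P * 'X^2 + d3%:P * 'X^3.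
  by rewrite /A /B /C /X /a /b /c /d1 /d2 /d3 !(polyCD, polyCM, polyCN, polyC1); ring.
rewrite [Q in _ = nth _ (polyseq Q) _](_ : _ = (-1)%:P + (d1 - e)%:P * 'X
    + (d2 + e * d1 - be - ga)%:P * 'X^2
    + (d3 + e * d2 - al + be * (a + b) + ga * (b + c) - de)%:P * 'X^3
    + (e * d3 + al * c - be * a * b - ga * b * c + de * a)%:P * 'X^4); last first.
  by rewrite den /A /B /C /X !(polyCD, polyCM, polyCN, polyC1); ring.
have coef_trunc k :
    (k <= n)%N -> (\poly_(i < N) coefF p q u v s t i)`_k = coefF p q u v s t k.
  by move=> kn; rewrite coef_poly ifT //; lia.
rewrite den coef_mul_cubic coef_quartic.
(* From degree 5 on the numerator vanishes and the recurrence applies. *)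
case: n nN coef_trunc => [|[|[|[|[|m]]]]] _ coef_trunc /=; rewrite !coef_trunc ?leq_subr //.
6: by rewrite !coefFS weight_sum_rec nth_nil /d1 /d2 /d3 /a /b /c; ring.
all: rewrite ?coefF0 ?coefFS ?weight_sumS ?weight_sum0.
all: by rewrite /d1 /d2 /d3 /a /b /c /e /al /be /ga /de; ring.
Qed.
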